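(* In the setting described in the context, for every $1\le i\le n/2$ and every $1\le j\le 2(n-1)$, $$\mathbb{E}[d_i(j)]\le 2\,\mathbb{E}[d_1(j)].$$
   Context: Let $n\ge4$ be even and let $d$ be a symmetric distance function satisfying the triangle inequality on the vertex set $\{1,\dots,n\}$ of the complete graph $G$. Let $s(v)=\sum_{u\ne v}d(u,v)$ and $\Delta=\sum_v s(v)$. A vertex minimizing $s$ is given the label $n$. Let $T'$ be a Hamiltonian cycle on the remaining $n-1$ vertices, with cyclic order $v_0,v_1,\dots,v_{n-2}$. Choose $\rho\in\{0,1,\dots,n-2\}$ uniformly at random and give vertex $v_{(p-1+\rho)\bmod (n-1)}$ the label $p$, for $p=1,\dots,n-1$; write $d(p,q)$ for the distance between the vertices labeled $p$ and $q$. All label arithmetic for labels in $\{1,\dots,n-1\}$ is modulo $n-1$, with representatives in $\{1,\dots,n-1\}$. Let $m=n/2$. For a ''first-season day'' $j\in\{1,\dots,n-1\}$ put $c_j\equiv m\,j \pmod{n-1}$; on that day the games (pairs of labels) are: game $1$ is $\{n,c_j\}$, and for $2\le i\le m$, game $i$ is $\{c_j+a_i,\,c_j-a_i\}$, where $a_i\in\{1,\dots,n-2\}$ is the unique element with $2a_i\equiv i-1\pmod{n-1}$ (so the two labels in game $i$ differ by $\pm(i-1)$ modulo $n-1$). The schedule has $2(n-1)$ days: days $1,\dots,n-1$ are the first-season days $1,\dots,n-1$, and days $n,n+1,\dots,2n-2$ repeat (with home venues reversed, irrelevant for distances) the games of first-season days $n-2,\,n-1,\,1,\,2,\dots,n-3$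 in this order. For $1\le i\le m$ and $1\le j\le 2(n-1)$, $d_i(j)$ denotes the distance between the two teams of game $i$ on day $j$. Expectations $\mathbb{E}$ are over the random $\rho$. *)

From HB Require Import structures.
From mathcomp Require Import all_boot all_order all_algebra.
Set Implicit Arguments. Unset Strict Implicit. Unset Printing Implicit Defensive.
Import Order.TTheory GRing.Theory Num.Theory.

(* Vertices are 'I_n.  The vertex labeled n is [w]; the Hamiltonian cycle T'
   on the other n-1 vertices is given by its cyclic order v 0, ..., v (n-2). *)

(* Representative in {1,...,n-1} of a label x modulo n-1. *)
Definition lbl (n x : nat) : nat := (x + (n - 2)) %% (n - 1) + 1.

Definition vert_of (n : nat) (w : 'I_n) (v : nat -> 'I_n) (rho p : nat) : 'I_n :=
  if p == n then w else v ((p - 1 + rho) %% (n - 1)).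

(* c_j = m j mod (n-1), m = n/2 (as a residue; labels are taken via lbl). *)
Definition cj (n j : nat) : nat := ((n %/ 2) * j) %% (n - 1).

Definition ai (n i : nat) : nat :=
  nth 0 [seq a <- iota 1 (n - 2) | (2 * a) %% (n - 1) == (i - 1) %% (n - 1)] 0.

(* The two labels of game i on first-season day j. *)
Definition game (n i j : nat) : nat * nat :=
  if i == 1 then (n, lbl n (cj n j))
  else (lbl n (cj n j + ai n i), lbl n (cj n j + (n - 1) - ai n i)).

(* First-season day whose games are played on schedule day j (1 <= j <= 2(n-1)). *)
Definition fsday (n j : nat) : nat :=
  if j <= n - 1 then j
  else if j == n then n - 2
  else if j == n + 1 then n - 1
  else j - n - 1.

Definition svert {R : numDomainType} (n : nat) (d : 'I_n -> 'I_n -> R) (x : 'I_n) : R :=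
  (\sum_(u < n | u != x) d u x)%R.

Definition dij {R : numDomainType} (n : nat) (d : 'I_n -> 'I_n -> R) (w : 'I_n)
  (v : nat -> 'I_n) (rho i j : nat) : R :=
  let g := game n i (fsday n j) in
  d (vert_of w v rho g.1) (vert_of w v rho g.2).

(* Expectation over rho uniform in {0,...,n-2}. *)
Definition Edij {R : numFieldType} (n : nat) (d : 'I_n -> 'I_n -> R) (w : 'I_n)
  (v : nat -> 'I_n) (i j : nat) : R :=
  ((n - 1)%:R^-1 * \sum_(rho < n - 1) dij d w v rho i j)%R.

From HB Require Import structures.
From mathcomp Require Import all_boot all_order all_algebra.
Import Order.TTheory GRing.Theory Num.Theory.
From mathcomp Require Import zify.

(* Under the uniform rotation rho, the vertex carrying a label p <> n runs once
   over every vertex of the cycle, so E[d(w, vertex of p)] is the average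
   A := (1/(n-1)) sum_k d(w, v k); for p = n it is 0 <= A.  Game 1 always pairs
   w with a label <> n, hence E[d_1(j)] = A, while the triangle inequality
   through w bounds every d_i(j) by two such distances, hence E[d_i(j)] <= 2A. *)

Local Open Scope ring_scope.

Lemma sum_rot_mod (V : nmodType) (N c : nat) (g : nat -> V) : (0 < N)%N ->
  \sum_(rho < N) g ((c + rho) %% N)%N = \sum_(k < N) g k.
Proof.
move=> N_gt0.
pose rot (r : 'I_N) : 'I_N := Ordinal (ltn_pmod (c + r) N_gt0).
have rot_inj : injective rot.
  move=> x y /(congr1 val) /= /eqP.
  by rewrite eqn_modDl !modn_small ?ltn_ord // => /eqP /val_inj.
by rewrite [RHS](reindex_inj rot_inj).
Qed.

Lemma lbl_neq (n x : nat) : (1 < n)%N -> lbl n x != n.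
Proof.
move=> n_gt1; have n1_gt0 : (0 < n - 1)%N by rewrite subn_gt0.
by rewrite /lbl; have := ltn_pmod (x + (n - 2)) n1_gt0; lia.
Qed.

Section RotationAverages.

Variables (R : realFieldType) (n : nat) (d : 'I_n -> 'I_n -> R).
Variables (w : 'I_n) (v : nat -> 'I_n).
Hypothesis n_gt1 : (1 < n)%N.
Hypothesis d_refl : forall x, d x x = 0.
Hypothesis d_ge0 : forall x y, 0 <= d x y.

Lemma vert_of_n (rho : nat) : vert_of w v rho n = w.
Proof. by rewrite /vert_of eqxx. Qed.

Let S := \sum_(k < n - 1) d w (v k).

Lemma sum_dist_vert_of_label (p : nat) : p != n ->
  \sum_(rho < n - 1) d w (vert_of w v rho p) = S.
Proof.
move=> /negbTE p_neq_n; rewrite /vert_of p_neq_n.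
by rewrite (@sum_rot_mod R _ _ (fun k => d w (v k))) // subn_gt0.
Qed.

Lemma sum_dist_vert_of_le (p : nat) :
  \sum_(rho < n - 1) d w (vert_of w v rho p) <= S.
Proof.
have [->|p_neq_n] := eqVneq p n; last by rewrite sum_dist_vert_of_label.
rewrite (eq_bigr (fun=> 0)) => [|rho _]; last by rewrite vert_of_n d_refl.
by rewrite big1 // sumr_ge0.
Qed.

Lemma Edij_first_game (j : nat) : Edij d w v 1 j = (n - 1)%:R^-1 * S.
Proof.
rewrite /Edij /dij /game /=; under eq_bigr do rewrite vert_of_n.
by rewrite sum_dist_vert_of_label ?lbl_neq.
Qed.

End RotationAverages.

Theorem lemma8 (R : realFieldType) (n : nat) (d : 'I_n -> 'I_n -> R)
  (w : 'I_n) (v : nat -> 'I_n)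
  (n_ge4 : (4 <= n)%N) (n_even : ~~ odd n)
  (d_refl : forall x, d x x = 0%R)
  (d_ge0 : forall x y, (0 <= d x y)%R)
  (d_sym : forall x y, d x y = d y x)
  (d_tri : forall x y z, (d x z <= d x y + d y z)%R)
  (w_min : forall x, (svert d w <= svert d x)%R)
  (v_avoid : forall k, (k < n - 1)%N -> v k != w)
  (v_inj : forall k l, (k < n - 1)%N -> (l < n - 1)%N -> v k = v l -> k = l) :
  forall i j, (1 <= i <= n %/ 2)%N -> (1 <= j <= 2 * (n - 1))%N ->
    (Edij d w v i j <= 2%:R * Edij d w v 1 j)%R.
Proof.
move=> i j _ _.
have n_gt1 : (1 < n)%N by lia.
set g := game n i (fsday n j).
have via_center rho : dij d w v rho i j <=
    d w (vert_of w v rho g.1) + d w (vert_of w v rho g.2).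
  by rewrite /dij -/g (le_trans (d_tri _ w _)) // d_sym.
rewrite Edij_first_game // mulrCA /Edij.
rewrite ler_wpM2l ?invr_ge0 ?ler0n //.
apply: le_trans (ler_sum _ (fun (rho : 'I_(n - 1)) _ => via_center rho)) _.
by rewrite big_split mulr2n mulrDl mul1r lerD ?sum_dist_vert_of_le.
Qed.
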